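(* Let $T>0$, $0<\eta<T$, $\alpha>0$ and $\beta\geq 0$ be constants with $\beta \neq \frac{2T-\alpha \eta ^{2}}{\alpha \eta ^{2}-2\eta+2T}$, and set $D=(\alpha \eta ^{2}-2T)-\beta (2\eta -\alpha \eta ^{2}-2T)$. Then for every $y\in C([0,T],\mathbb{R})$, the boundary value problem \[ u''(t)+y(t)=0,\ t\in(0,T),\qquad u(0)=\beta u(\eta),\quad u(T)=\alpha\int_0^\eta u(s)\,ds \] has a unique solution, given by \begin{align*} u(t)&=\frac{\beta (2T-\alpha \eta ^{2})-2\beta (1-\alpha \eta)t}{D}\int_{0}^{\eta }(\eta -s)y(s)\,ds +\frac{\alpha \beta\eta -\alpha (\beta -1)t}{D}\int_{0}^{\eta }(\eta -s)^{2}y(s)\,ds \\ &\quad+\frac{2(\beta-1)t-2\beta \eta }{D}\int_{0}^{T}(T-s)y(s)\,ds- \int_{0}^{t}(t-s)y(s)\,ds. \end{align*}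
   Context: Standing assumptions of the paper: $T>0$, $\eta\in(0,T)$, $\alpha>0$, $\beta\geq0$. A solution is a function $u\in C^2([0,T])$ satisfying the differential equation on $(0,T)$ and the two boundary conditions. *)

From Stdlib Require Import Reals.
From Coquelicot Require Import Coquelicot.
Open Scope R_scope.

Definition cont_on (a b : R) (f : R -> R) : Prop :=
  forall x, a <= x <= b -> forall eps, 0 < eps ->
    exists delta, 0 < delta /\
      forall z, a <= z <= b -> Rabs (z - x) < delta -> Rabs (f z - f x) < eps.

Definition deriv_on (a b : R) (f f' : R -> R) : Prop :=
  forall x, a <= x <= b -> forall eps, 0 < eps ->
    exists delta, 0 < delta /\
      forall z, a <= z <= b -> Rabs (z - x) < delta ->
        Rabs (f z - f x - f' x * (z - x)) <= eps * Rabs (z - x).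

Definition is_solution (T eta alpha beta : R) (y u : R -> R) : Prop :=
  exists u1 u2 : R -> R,
    deriv_on 0 T u u1 /\ deriv_on 0 T u1 u2 /\ cont_on 0 T u2 /\
    (forall t, 0 < t < T -> u2 t + y t = 0) /\
    u 0 = beta * u eta /\
    u T = alpha * RInt u 0 eta.

Definition sol_formula (T eta alpha beta : R) (y : R -> R) (t : R) : R :=
  let D := (alpha * eta ^ 2 - 2 * T) - beta * (2 * eta - alpha * eta ^ 2 - 2 * T) in
  (beta * (2 * T - alpha * eta ^ 2) - 2 * beta * (1 - alpha * eta) * t) / D
    * RInt (fun s => (eta - s) * y s) 0 eta
  + (alpha * beta * eta - alpha * (beta - 1) * t) / D
    * RInt (fun s => (eta - s) ^ 2 * y s) 0 eta
  + (2 * (beta - 1) * t - 2 * beta * eta) / D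
    * RInt (fun s => (T - s) * y s) 0 T
  - RInt (fun s => (t - s) * y s) 0 t.

From Stdlib Require Import Reals Lra Psatz.
From Coquelicot Require Import Coquelicot.
Open Scope R_scope.

(* Let V(t) = int_0^t (t - s) y(s) ds, so that V' = int_0^t y and V'' = y.  Every
   C^2 solution of u'' + y = 0 on [0,T] is then u(t) = A + B t - V(t) with A = u(0),
   B = u'(0), and every such function solves the equation.  The explicit formula has
   this shape as well, and int_0^eta V = 1/2 int_0^eta (eta - s)^2 y(s) ds, so the two
   boundary conditions become a 2x2 linear system in (A, B) with determinant -D/2 <> 0;
   its unique solution is the one appearing in the formula.  Since y is only continuous
   on [0,T], it is first extended continuously to the whole line. *)

Definition clamp (a b x : R) : R := Rmax a (Rmin b x).

Lemma clamp_in a b x : a <= b -> a <= clamp a b x <= b.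
Proof. intros; unfold clamp, Rmax, Rmin; repeat destruct Rle_dec; lra. Qed.

Lemma clamp_id a b x : a <= x <= b -> clamp a b x = x.
Proof. intros; unfold clamp, Rmax, Rmin; repeat destruct Rle_dec; lra. Qed.

Lemma clamp_lipschitz a b x z : a <= b -> Rabs (clamp a b z - clamp a b x) <= Rabs (z - x).
Proof.
  intros; unfold clamp, Rmax, Rmin; repeat destruct Rle_dec;
    unfold Rabs; repeat destruct Rcase_abs; lra.
Qed.

Lemma cont_on_extension a b f : a <= b -> cont_on a b f ->
  exists g, (forall x, continuous g x) /\ (forall x, a <= x <= b -> g x = f x).
Proof.
  intros Hab Hf. exists (fun x => f (clamp a b x)). split.
  - intros x. apply continuity_pt_filterlim. intros eps Heps.
    destruct (Hf (clamp a b x) (clamp_in a b x Hab) eps Heps) as [d [Hd Hz]].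
    exists d; split; [exact Hd|]. intros z [_ Hzx].
    apply Hz; [apply clamp_in; exact Hab|].
    eapply Rle_lt_trans; [apply clamp_lipschitz; exact Hab | exact Hzx].
  - intros x Hx. rewrite clamp_id by exact Hx. reflexivity.
Qed.

Lemma cont_on_continuous a b f : (forall x, continuous f x) -> cont_on a b f.
Proof.
  intros Hc x _ eps Heps.
  destruct (proj2 (continuity_pt_filterlim f x) (Hc x) eps Heps) as [d [Hd Hz]].
  exists d; split; [exact Hd|]. intros z _ Hzx.
  destruct (Req_dec z x) as [->|Hzx'].
  - unfold Rminus; rewrite Rplus_opp_r, Rabs_R0; exact Heps.
  - apply (Hz z). split; [split; [exact I | auto] | exact Hzx].
Qed.

Lemma deriv_on_cont a b f f' : deriv_on a b f f' -> cont_on a b f.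
Proof.
  intros Hd x Hx eps Heps.
  destruct (Hd x Hx 1 Rlt_0_1) as [d [Hdp Hz]].
  set (K := Rabs (f' x) + 1).
  assert (HK : 0 < K) by (unfold K; pose proof (Rabs_pos (f' x)); lra).
  exists (Rmin d (eps / K)); split.
  { apply Rmin_pos; [exact Hdp | apply Rdiv_lt_0_compat; assumption]. }
  intros z Hzab Hzx. apply Rmin_Rgt in Hzx as [Hzd HzK].
  specialize (Hz z Hzab Hzd).
  assert (Htri : Rabs (f z - f x)
                 <= Rabs (f z - f x - f' x * (z - x)) + Rabs (f' x) * Rabs (z - x)).
  { rewrite <- Rabs_mult.
    replace (f z - f x) with ((f z - f x - f' x * (z - x)) + f' x * (z - x)) at 1 by ring.
    apply Rabs_triang. }
  assert (HKz : K * Rabs (z - x) < eps).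
  { replace eps with (K * (eps / K)) by (field; lra).
    apply Rmult_lt_compat_l; [exact HK | exact HzK]. }
  unfold K in HKz. lra.
Qed.

Lemma deriv_on_is_derive a b f f' x : deriv_on a b f f' -> a < x < b -> is_derive f x (f' x).
Proof.
  intros Hd Hx. apply is_derive_Reals. intros eps Heps.
  destruct (Hd x ltac:(lra) (eps / 2) ltac:(lra)) as [d [Hdp Hz]].
  assert (Hm : 0 < Rmin d (Rmin (x - a) (b - x))) by (repeat apply Rmin_pos; lra).
  exists (mkposreal _ Hm). intros h Hh0 Hh. simpl in Hh.
  apply Rmin_Rgt in Hh as [Hhd Hh]. apply Rmin_Rgt in Hh as [Hha Hhb].
  assert (Hxh : a <= x + h <= b) by (apply Rabs_def2 in Hha; apply Rabs_def2 in Hhb; lra).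
  specialize (Hz (x + h) Hxh). replace (x + h - x) with h in Hz by ring.
  specialize (Hz Hhd).
  assert (Hh' : 0 < Rabs h) by (apply Rabs_pos_lt; exact Hh0).
  replace ((f (x + h) - f x) / h - f' x) with ((f (x + h) - f x - f' x * h) / h)
    by (field; exact Hh0).
  unfold Rdiv; rewrite Rabs_mult, Rabs_inv.
  apply (Rmult_lt_reg_r (Rabs h)); [exact Hh'|].
  rewrite Rmult_assoc, Rinv_l by lra. nra.
Qed.

Lemma is_derive_deriv_on a b f f' : (forall x, is_derive f x (f' x)) -> deriv_on a b f f'.
Proof.
  intros Hf x _ eps Heps.
  destruct (proj1 (is_derive_Reals _ _ _) (Hf x) eps Heps) as [d Hd].
  exists d; split; [apply cond_pos|]. intros z _ Hzx.
  destruct (Req_dec z x) as [->|Hzx'].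
  { unfold Rminus; rewrite !Rplus_opp_r, Rmult_0_r, Rplus_opp_r, Rabs_R0. lra. }
  assert (Hh : z - x <> 0) by lra.
  specialize (Hd (z - x) Hh Hzx). replace (x + (z - x)) with z in Hd by ring.
  replace (f z - f x - f' x * (z - x)) with (((f z - f x) / (z - x) - f' x) * (z - x))
    by (field; exact Hh).
  rewrite Rabs_mult. pose proof (Rabs_pos (z - x)). nra.
Qed.

Lemma deriv_on_ext a b f g f' g' : deriv_on a b f f' ->
  (forall x, a <= x <= b -> f x = g x) -> (forall x, a <= x <= b -> f' x = g' x) ->
  deriv_on a b g g'.
Proof.
  intros Hd Hfg Hfg' x Hx eps Heps.
  destruct (Hd x Hx eps Heps) as [d [Hdp Hz]].
  exists d; split; [exact Hdp|]. intros z Hz' Hzx.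
  rewrite <- !Hfg, <- Hfg' by assumption. exact (Hz z Hz' Hzx).
Qed.

Lemma deriv_on_plus a b f g f' g' : deriv_on a b f f' -> deriv_on a b g g' ->
  deriv_on a b (fun x => f x + g x) (fun x => f' x + g' x).
Proof.
  intros Hf Hg x Hx eps Heps.
  destruct (Hf x Hx (eps / 2) ltac:(lra)) as [d1 [Hd1 H1]].
  destruct (Hg x Hx (eps / 2) ltac:(lra)) as [d2 [Hd2 H2]].
  exists (Rmin d1 d2); split; [apply Rmin_pos; assumption|].
  intros z Hz Hzx. apply Rmin_Rgt in Hzx as [Hz1 Hz2].
  specialize (H1 z Hz Hz1). specialize (H2 z Hz Hz2).
  replace (f z + g z - (f x + g x) - (f' x + g' x) * (z - x))
    with ((f z - f x - f' x * (z - x)) + (g z - g x - g' x * (z - x))) by ring.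
  eapply Rle_trans; [apply Rabs_triang | lra].
Qed.

Lemma deriv_on_const a b f f' : a < b -> deriv_on a b f f' ->
  (forall x, a < x < b -> f' x = 0) -> forall x, a <= x <= b -> f x = f a.
Proof.
  intros Hab Hd Hd0 x Hx.
  destruct (cont_on_extension a b f ltac:(lra) (deriv_on_cont a b f f' Hd)) as [g [Hgc Hg]].
  destruct (Req_dec x a) as [->|Hxa]; [reflexivity|].
  rewrite <- (Hg x Hx), <- (Hg a) by lra.
  destruct (MVT_gen g a x (fun _ => 0)) as [c [_ Hc]]; [| |lra].
  - intros c Hc. rewrite Rmin_left, Rmax_right in Hc by lra.
    apply (is_derive_ext_loc f).
    + apply (locally_interval _ c a b); [simpl; lra | simpl; lra|].
      intros t Hta Htb. symmetry. apply Hg. simpl in Hta, Htb. lra.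
    + rewrite <- (Hd0 c) by lra. apply (deriv_on_is_derive a b); [exact Hd | lra].
  - intros c _. apply continuity_pt_filterlim, Hgc.
Qed.

Definition moment (y : R -> R) (k : nat) (t : R) : R := RInt (fun s => s ^ k * y s) 0 t.

Definition volterra (y : R -> R) (t : R) : R := RInt (fun s => (t - s) * y s) 0 t.

Lemma moment_0 y k : moment y k 0 = 0.
Proof. exact (RInt_point 0 _). Qed.

Lemma volterra_0 y : volterra y 0 = 0.
Proof. exact (RInt_point 0 _). Qed.

Section Volterra.

Variable y : R -> R.
Hypothesis y_cont : forall x, continuous y x.

Lemma continuous_pow_mul k x : continuous (fun s => s ^ k * y s) x.
Proof.
  apply (continuous_mult (fun s => s ^ k) y); [|apply y_cont].
  apply (@ex_derive_continuous R_AbsRing R_NormedModule). auto_derive. exact I.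
Qed.

Lemma ex_RInt_pow_mul k a b : ex_RInt (fun s => s ^ k * y s) a b.
Proof.
  apply (@ex_RInt_continuous R_CompleteNormedModule). intros; apply continuous_pow_mul.
Qed.

Lemma is_derive_moment k t : is_derive (moment y k) t (t ^ k * y t).
Proof.
  apply (is_derive_RInt (fun s => s ^ k * y s) (moment y k) 0); [|apply continuous_pow_mul].
  apply filter_forall. intros b. apply (@RInt_correct R_CompleteNormedModule), ex_RInt_pow_mul.
Qed.

Lemma RInt_quadratic_mul a0 a1 a2 t :
  RInt (fun s => (a0 + a1 * s + a2 * s ^ 2) * y s) 0 t
  = a0 * moment y 0 t + a1 * moment y 1 t + a2 * moment y 2 t.
Proof.
  apply is_RInt_unique.
  assert (H := is_RInt_plus _ _ _ _ _ _
    (is_RInt_plus _ _ _ _ _ _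
       (is_RInt_scal _ _ _ a0 _ (RInt_correct _ 0 t (ex_RInt_pow_mul 0 0 t)))
       (is_RInt_scal _ _ _ a1 _ (RInt_correct _ 0 t (ex_RInt_pow_mul 1 0 t))))
    (is_RInt_scal _ _ _ a2 _ (RInt_correct _ 0 t (ex_RInt_pow_mul 2 0 t)))).
  eapply is_RInt_ext; [|exact H].
  intros x _. unfold plus, scal; simpl; unfold mult; simpl. ring.
Qed.

Lemma volterra_moment t : volterra y t = t * moment y 0 t - moment y 1 t.
Proof.
  unfold volterra. rewrite (RInt_ext _
      (fun s => (t + (-1) * s + 0 * s ^ 2) * y s))
    by (intros; f_equal; ring).
  rewrite RInt_quadratic_mul. ring.
Qed.

Lemma is_derive_volterra t : is_derive (volterra y) t (moment y 0 t).
Proof.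
  apply (is_derive_ext (fun t => t * moment y 0 t - moment y 1 t));
    [intros; symmetry; apply volterra_moment|].
  auto_derive.
  - repeat split; eexists; apply is_derive_moment.
  - rewrite !(is_derive_unique _ _ _ (is_derive_moment _ t)). simpl. ring.
Qed.

Lemma RInt_volterra t :
  RInt (volterra y) 0 t = RInt (fun s => (t - s) ^ 2 * y s) 0 t / 2.
Proof.
  set (F := fun t => (t ^ 2 * moment y 0 t - 2 * t * moment y 1 t + moment y 2 t) / 2).
  assert (HF : RInt (fun s => (t - s) ^ 2 * y s) 0 t / 2 = F t - F 0).
  { unfold F. rewrite !moment_0.
    rewrite (RInt_ext _
      (fun s => (t ^ 2 + (- 2 * t) * s + 1 * s ^ 2) * y s))
      by (intros; f_equal; ring).
    rewrite RInt_quadratic_mul. field. }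
  rewrite HF. apply is_RInt_unique, (is_RInt_derive F (volterra y)).
  - intros x _. unfold F. auto_derive.
    + repeat split; eexists; apply is_derive_moment.
    + rewrite !(is_derive_unique _ _ _ (is_derive_moment _ x)), volterra_moment.
      simpl. field.
  - intros x _. apply (@ex_derive_continuous R_AbsRing R_NormedModule).
    eexists. apply is_derive_volterra.
Qed.

End Volterra.

Lemma second_order_ode_solution T y u u1 u2 : 0 < T -> (forall x, continuous y x) ->
  deriv_on 0 T u u1 -> deriv_on 0 T u1 u2 -> (forall t, 0 < t < T -> u2 t + y t = 0) ->
  forall t, 0 <= t <= T -> u t = u 0 + u1 0 * t - volterra y t.
Proof.
  intros HT Hy Hu Hu1 Hode.
  assert (Hslope : forall t, 0 <= t <= T -> u1 t + moment y 0 t = u1 0).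
  { intros t Ht.
    assert (Hd := deriv_on_plus _ _ _ _ _ _ Hu1
                    (is_derive_deriv_on 0 T _ _ (is_derive_moment y Hy 0))).
    rewrite (deriv_on_const 0 T _ _ HT Hd), moment_0; [ring | | exact Ht].
    intros x Hx. simpl. rewrite Rmult_1_l. apply Hode, Hx. }
  intros t Ht.
  assert (Hlin : forall x, is_derive (fun x => - u1 0 * x) x (- u1 0)).
  { intros x. auto_derive; [exact I | ring]. }
  assert (Hd := deriv_on_plus _ _ _ _ _ _
                  (deriv_on_plus _ _ _ _ _ _ Hu
                     (is_derive_deriv_on 0 T _ _ (is_derive_volterra y Hy)))
                  (is_derive_deriv_on 0 T _ _ Hlin)).
  assert (Hc := deriv_on_const 0 T _ _ HT Hd).
  simpl in Hc. rewrite volterra_0 in Hc.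
  assert (Ht' := Hc ltac:(intros x Hx; rewrite Hslope by lra; ring) t Ht). lra.
Qed.

Definition bvp_det (T eta alpha beta : R) : R :=
  (alpha * eta ^ 2 - 2 * T) - beta * (2 * eta - alpha * eta ^ 2 - 2 * T).

Lemma bvp_det_neq0 T eta alpha beta : 0 < eta < T -> 0 < alpha ->
  beta <> (2 * T - alpha * eta ^ 2) / (alpha * eta ^ 2 - 2 * eta + 2 * T) ->
  bvp_det T eta alpha beta <> 0.
Proof.
  intros Heta Halpha Hbeta HD. apply Hbeta.
  assert (Hden : 0 < alpha * eta ^ 2 - 2 * eta + 2 * T) by nra.
  unfold bvp_det in HD. field_simplify_eq; lra.
Qed.

Section BoundaryConditions.

Variables T eta alpha beta Ve We VT : R.
Hypothesis det_neq0 : bvp_det T eta alpha beta <> 0.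

Definition bvp_intercept : R :=
  (beta * (2 * T - alpha * eta ^ 2) * Ve + alpha * beta * eta * We - 2 * beta * eta * VT)
  / bvp_det T eta alpha beta.

Definition bvp_slope : R :=
  (- 2 * beta * (1 - alpha * eta) * Ve - alpha * (beta - 1) * We + 2 * (beta - 1) * VT)
  / bvp_det T eta alpha beta.

Lemma bvp_linear_system A B :
  (A = beta * (A + B * eta - Ve) /\
   A + B * T - VT = alpha * (A * eta + B * eta ^ 2 / 2 - We / 2))
  <-> (A = bvp_intercept /\ B = bvp_slope).
Proof.
  unfold bvp_intercept, bvp_slope. split.
  - intros [E1 E2].
    (* Cramer's rule: the determinant of the system is [- bvp_det / 2]. *)
    assert (HA : bvp_det T eta alpha beta * A
                 = beta * (2 * T - alpha * eta ^ 2) * Ve + alpha * beta * eta * We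
                   - 2 * beta * eta * VT).
    { pose proof (f_equal (Rmult (2 * T - alpha * eta ^ 2)) E1).
      pose proof (f_equal (Rmult (beta * eta)) E2).
      unfold bvp_det. lra. }
    assert (HB : bvp_det T eta alpha beta * B
                 = - 2 * beta * (1 - alpha * eta) * Ve - alpha * (beta - 1) * We
                   + 2 * (beta - 1) * VT).
    { pose proof (f_equal (Rmult (2 - 2 * alpha * eta)) E1).
      pose proof (f_equal (Rmult (1 - beta)) E2).
      unfold bvp_det. lra. }
    rewrite <- HA, <- HB. split; field; exact det_neq0.
  - intros [-> ->]. unfold bvp_det in *. split; field; exact det_neq0.
Qed.

End BoundaryConditions.

Lemma sol_formula_affine T eta alpha beta y t :
  let Ve := volterra y eta in
  let We := RInt (fun s => (eta - s) ^ 2 * y s) 0 eta in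
  let VT := volterra y T in
  sol_formula T eta alpha beta y t
  = bvp_intercept T eta alpha beta Ve We VT + bvp_slope T eta alpha beta Ve We VT * t
    - volterra y t.
Proof. unfold sol_formula, bvp_intercept, bvp_slope, bvp_det, volterra, Rdiv. ring. Qed.

Lemma RInt_affine_sub_volterra y A B b : (forall x, continuous y x) ->
  RInt (fun t => A + B * t - volterra y t) 0 b
  = A * b + B * b ^ 2 / 2 - RInt (fun s => (b - s) ^ 2 * y s) 0 b / 2.
Proof.
  intros Hy. rewrite <- (RInt_volterra y Hy). apply is_RInt_unique.
  apply (is_RInt_minus (fun t => A + B * t) (volterra y)).
  - set (F := fun t => A * t + B * t ^ 2 / 2).
    replace (A * b + B * b ^ 2 / 2) with (minus (F b) (F 0))
      by (unfold F, minus, plus, opp; simpl; field).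
    apply (is_RInt_derive F).
    + intros x _. unfold F. auto_derive; [exact I | simpl; field].
    + intros x _. apply (@ex_derive_continuous R_AbsRing R_NormedModule). auto_derive. exact I.
  - apply (@RInt_correct R_CompleteNormedModule), (@ex_RInt_continuous R_CompleteNormedModule).
    intros x _. apply (@ex_derive_continuous R_AbsRing R_NormedModule).
    eexists. apply (is_derive_volterra y Hy).
Qed.

Lemma boundary_conditions_affine T eta alpha beta y u A B :
  0 < eta < T -> (forall x, continuous y x) -> bvp_det T eta alpha beta <> 0 ->
  (forall t, 0 <= t <= T -> u t = A + B * t - volterra y t) ->
  let Ve := volterra y eta in
  let We := RInt (fun s => (eta - s) ^ 2 * y s) 0 eta in
  let VT := volterra y T in
  (u 0 = beta * u eta /\ u T = alpha * RInt u 0 eta)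
  <-> (A = bvp_intercept T eta alpha beta Ve We VT /\ B = bvp_slope T eta alpha beta Ve We VT).
Proof.
  intros Heta Hy HD Hu Ve We VT.
  rewrite <- bvp_linear_system by exact HD.
  rewrite (RInt_ext u (fun t => A + B * t - volterra y t)), RInt_affine_sub_volterra.
  2: exact Hy.
  2: { intros x Hx. rewrite Rmin_left, Rmax_right in Hx by lra. apply Hu. lra. }
  rewrite !Hu, volterra_0 by lra. fold Ve We VT.
  split; intros [E1 E2]; split; lra.
Qed.

Lemma is_solution_iff_sol_formula T eta alpha beta y :
  0 < eta < T -> (forall x, continuous y x) -> bvp_det T eta alpha beta <> 0 ->
  forall u, is_solution T eta alpha beta y u <->
    (forall t, 0 <= t <= T -> u t = sol_formula T eta alpha beta y t).
Proof.
  intros Heta Hy HD u.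
  set (Ve := volterra y eta). set (We := RInt (fun s => (eta - s) ^ 2 * y s) 0 eta).
  set (VT := volterra y T).
  set (A := bvp_intercept T eta alpha beta Ve We VT).
  set (B := bvp_slope T eta alpha beta Ve We VT).
  assert (Hformula : forall t, sol_formula T eta alpha beta y t = A + B * t - volterra y t)
    by (intros; apply sol_formula_affine).
  split.
  - intros (u1 & u2 & Hu & Hu1 & _ & Hode & Hbc0 & HbcT) t Ht.
    assert (Hgen := second_order_ode_solution T y u u1 u2 ltac:(lra) Hy Hu Hu1 Hode).
    destruct (proj1 (boundary_conditions_affine T eta alpha beta y u _ _ Heta Hy HD Hgen)
                (conj Hbc0 HbcT)) as [HA HB].
    rewrite Hformula, Hgen, HA, HB by exact Ht. reflexivity.
  - intros Hu.
    assert (Hu' : forall t, 0 <= t <= T -> u t = A + B * t - volterra y t)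
      by (intros; rewrite <- Hformula; auto).
    exists (fun t => B - moment y 0 t), (fun t => - y t).
    split; [|split; [|split; [|split]]].
    + apply (deriv_on_ext 0 T (fun t => A + B * t - volterra y t) _
               (fun t => B - moment y 0 t));
        [| intros; symmetry; auto | reflexivity].
      apply is_derive_deriv_on. intros x. auto_derive.
      * eexists; apply (is_derive_volterra y Hy).
      * erewrite is_derive_unique by apply (is_derive_volterra y Hy). simpl. ring.
    + apply is_derive_deriv_on. intros x. auto_derive.
      * eexists; apply (is_derive_moment y Hy).
      * erewrite is_derive_unique by apply (is_derive_moment y Hy). simpl. ring.
    + apply cont_on_continuous. intros x.
      apply continuity_pt_filterlim, continuity_pt_opp, continuity_pt_filterlim, Hy.
    + intros; ring.
    + apply (boundary_conditions_affine T eta alpha beta y u A B Heta Hy HD Hu').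
      split; reflexivity.
Qed.

Lemma is_solution_ext T eta alpha beta y z u : (forall t, 0 < t < T -> y t = z t) ->
  is_solution T eta alpha beta y u -> is_solution T eta alpha beta z u.
Proof.
  intros Hyz (u1 & u2 & Hu & Hu1 & Hc & Hode & Hbc0 & HbcT).
  exists u1, u2. repeat split; try assumption.
  intros t Ht. rewrite <- Hyz by exact Ht. apply Hode, Ht.
Qed.

Lemma sol_formula_ext T eta alpha beta y z t : 0 < eta < T ->
  (forall s, 0 <= s <= T -> y s = z s) -> 0 <= t <= T ->
  sol_formula T eta alpha beta y t = sol_formula T eta alpha beta z t.
Proof.
  intros Heta Hyz Ht.
  assert (Hint : forall (g : R -> R) b, 0 <= b <= T ->
            RInt (fun s => g s * y s) 0 b = RInt (fun s => g s * z s) 0 b).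
  { intros g b Hb. apply RInt_ext. intros s Hs.
    rewrite Rmin_left, Rmax_right in Hs by lra. rewrite Hyz by lra. reflexivity. }
  unfold sol_formula. rewrite !Hint by lra. reflexivity.
Qed.

Theorem lemma2p1 (T eta alpha beta : R) (y : R -> R)
  (hT : 0 < T) (heta : 0 < eta < T) (halpha : 0 < alpha) (hbeta : 0 <= beta)
  (hbetaD : beta <> (2 * T - alpha * eta ^ 2) / (alpha * eta ^ 2 - 2 * eta + 2 * T))
  (hy : cont_on 0 T y) :
  forall u : R -> R,
    is_solution T eta alpha beta y u <->
    (forall t, 0 <= t <= T -> u t = sol_formula T eta alpha beta y t).
Proof.
  intros u.
  destruct (cont_on_extension 0 T y ltac:(lra) hy) as [z [Hz Hzy]].
  assert (HD := bvp_det_neq0 T eta alpha beta heta halpha hbetaD).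
  assert (Hsol : is_solution T eta alpha beta y u <-> is_solution T eta alpha beta z u).
  { split; apply is_solution_ext; intros t Ht; rewrite Hzy by lra; reflexivity. }
  rewrite Hsol, (is_solution_iff_sol_formula T eta alpha beta z heta Hz HD).
  split; intros Hu t Ht; rewrite Hu by exact Ht; apply sol_formula_ext; auto.
  intros s Hs. symmetry. auto.
Qed.
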